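(* Let $L$ be a frame and for $a\in L$ write $\mathfrak c_f(a)=\{x\in L\mid x\vee a=1\}$. Then: (1) $L$ is subfit if and only if for every $a\in L$ the supplement of $\mathfrak c_f(a)$ in $\mathsf{Filt}(L)$ equals ${\uparrow}a$, i.e. $\{b\in L\mid\forall x\in\mathfrak c_f(a),\ b\vee x=1\}={\uparrow}a$; (2) $L$ is a Boolean algebra if and only if for every $a\in L$, ${\uparrow}a\sqcap\mathfrak c_f(a)=L$, i.e. $\{f\wedge g\mid f\in{\uparrow}a,\ g\in\mathfrak c_f(a)\}=L$.
   Context: A frame is a complete lattice $L$ with $(\bigvee A)\wedge b=\bigvee_{a\in A}(a\wedge b)$. $L$ is subfit if for all $a,b$: whenever ($\forall c$, $a\vee c=1\Rightarrow b\vee c=1$) then $a\le b$. $\mathsf{Filt}(L)$ is the set of filters (nonempty up-closed subsets closed under finite meets) ordered by reverse inclusion $\sqsubseteq$; it is a coframe with least element $L$, greatest element $\{1\}$, binary meet $F\sqcap G=\{f\wedge g\mid f\in F,g\in G\}$, difference $H\setminus G=\{a\mid\forall b\in G,\ b\vee a\in H\}$, and supplement $F^\#=\{1\}\setminus F$. *)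

From HB Require Import structures.
From mathcomp Require Import all_boot all_order.
Set Implicit Arguments. Unset Strict Implicit. Unset Printing Implicit Defensive.
Import Order.TTheory.
Local Open Scope order_scope.

Definition pset (T : Type) := T -> Prop.
Definition pset_eq (T : Type) (A B : pset T) := forall x, A x <-> B x.

Section Frames.
Context {disp : Order.disp_t} {L : tbDistrLatticeType disp}.

Definition is_frame (sup : pset L -> L) : Prop :=
  [/\ (forall (A : pset L) x, A x -> x <= sup A),
      (forall (A : pset L) y, (forall x, A x -> x <= y) -> sup A <= y) &
      (forall (A : pset L) b,
          sup A `&` b = sup (fun c => exists2 a, A a & c = a `&` b))].

Definition subfit : Prop :=
  forall a b : L, (forall c, a `|` c = \top -> b `|` c = \top) -> a <= b.

Definition boolean_lattice : Prop :=
  forall a : L, exists b : L, a `&` b = \bot /\ a `|` b = \top.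

Definition is_filter (F : pset L) : Prop :=
  [/\ exists x, F x,
      (forall x y, F x -> x <= y -> F y) &
      (forall x y, F x -> F y -> F (x `&` y))].

Definition upset (a : L) : pset L := fun x => a <= x.
Definition cf (a : L) : pset L := fun x => x `|` a = \top.
Definition filt_top : pset L := fun x => x = \top.

(* operations of the coframe Filt(L) (ordered by reverse inclusion) *)
Definition filt_meet (F G : pset L) : pset L :=
  fun c => exists f g, [/\ F f, G g & c = f `&` g].
Definition filt_diff (H G : pset L) : pset L :=
  fun a => forall b, G b -> H (b `|` a).
Definition filt_supp (F : pset L) : pset L := filt_diff filt_top F.
Definition filt_full : pset L := fun _ => True.

End Frames.

From HB Require Import structures.
From mathcomp Require Import all_boot all_order.
Import Order.TTheory.
Local Open Scope order_scope.

(* Both equivalences are first-order facts about bounded distributive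
   lattices: the supplement of cf(a) is exactly the set of b satisfying the
   hypothesis of subfitness for the pair (a, b), and it always contains the
   principal filter of a.  For (2), if a' complements a then every c splits as
   (a | c) & (a' | c); conversely, writing bot = f & g with a <= f and
   g | a = top makes g a complement of a. *)

Section DistrLatticeFilters.
Context {disp : Order.disp_t} {L : tbDistrLatticeType disp}.

Lemma filt_supp_cfP (a b : L) :
  filt_supp (cf a) b <-> (forall c, a `|` c = \top -> b `|` c = \top).
Proof.
rewrite /filt_supp /filt_diff /filt_top /cf.
by split=> H c; rewrite joinC => /H; rewrite joinC.
Qed.

Lemma upset_sub_filt_supp_cf (a b : L) : upset a b -> filt_supp (cf a) b.
Proof.
move=> le_ab; apply/filt_supp_cfP => c ac_top.
by apply/eqP; rewrite eq_le lex1 -ac_top leU2.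
Qed.

Lemma subfitE :
  subfit (L := L) <-> forall a : L, pset_eq (filt_supp (cf a)) (upset a).
Proof.
split=> [sf a b | supp_eq a b sub_ab].
- by split; [move/filt_supp_cfP; apply: sf | apply: upset_sub_filt_supp_cf].
- by apply/(supp_eq a b)/filt_supp_cfP.
Qed.

Lemma complement_filt_meet_full (a a' : L) :
  a `&` a' = \bot -> a `|` a' = \top ->
  pset_eq (filt_meet (upset a) (cf a)) filt_full.
Proof.
move=> aa'_bot aa'_top c; split=> // _.
exists (a `|` c), (a' `|` c); split.
- exact: leUl.
- by rewrite /cf joinC joinA aa'_top join1x.
- by rewrite -joinIl aa'_bot join0x.
Qed.

Lemma filt_meet_bot_complement (a : L) :
  filt_meet (upset a) (cf a) \bot -> exists a', a `&` a' = \bot /\ a `|` a' = \top.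
Proof.
move=> [f [g [le_af g_cf bot_fg]]]; exists g; split; last by rewrite joinC.
by apply/eqP; rewrite eq_le le0x andbT bot_fg leI2.
Qed.

Lemma boolean_latticeE :
  boolean_lattice (L := L) <->
    forall a : L, pset_eq (filt_meet (upset a) (cf a)) filt_full.
Proof.
split=> [bool a | full a].
- by have [a' [bot top]] := bool a; apply: complement_filt_meet_full bot top.
- by apply: filt_meet_bot_complement; apply/(full a \bot).
Qed.

End DistrLatticeFilters.

Theorem mainTheorem19 (disp : Order.disp_t) (L : tbDistrLatticeType disp)
    (sup : pset L -> L) (Hframe : is_frame sup) :
  (subfit (L := L) <-> forall a : L, pset_eq (filt_supp (cf a)) (upset a)) /\
  (boolean_lattice (L := L) <->
     forall a : L, pset_eq (filt_meet (upset a) (cf a)) filt_full).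
Proof. exact: (conj subfitE boolean_latticeE). Qed.
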